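(* Let $S$ be a nonempty set, and in the category $\mathbf{Sets}$ let $U:\mathbf{Sets}\to\mathbf{Sets}$ be the functor $X\mapsto X^S$, right adjoint to $F: X\mapsto S\times X$, with $T=UF$ the associated state monad. Then $U$ is monadic, i.e. the comparison functor $K:\mathbf{Sets}\to\mathbf{Alg}^T$, $K(Y)=(Y^S,\epsilon_Y^S)$, $K(g)=g^S$, is an equivalence of categories.
   Context: For a set $X$, $TX=(S\times X)^S$; the unit $\eta_X:X\to TX$ sends $x$ to $s\mapsto (s,x)$; the multiplication $\mu_X:TTX\to TX$ is $(\epsilon_{S\times X})^S$, i.e. it sends $s\mapsto (c[s], s'\mapsto (c'[s,s'],x[s,s']))$ to $s\mapsto (c'[s,c[s]],x[s,c[s]])$. Here $\epsilon_Z:S\times Z^S\to Z$, $(s,f)\mapsto f(s)$, is evaluation (the counit of the adjunction $F\dashv U$). A $T$-algebra is a pair $(X,h)$ with $h:TX\to X$ satisfying $h\circ Th=h\circ\mu_X$ and $h\circ\eta_X=\mathrm{id}_X$; a morphism $(X,h)\to(X',h')$ is a map $u:X\to X'$ with $h'\circ Tu=u\circ h$; these form the category $\mathbf{Alg}^T$. ''Monadic'' here means that $K$ is an equivalence of categories (not necessarily an isomorphism). *)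

From Stdlib Require Import FunctionalExtensionality ProofIrrelevance.

Set Implicit Arguments.
Unset Strict Implicit.

Record Category := {
  Obj :> Type;
  Hom : Obj -> Obj -> Type;
  idm : forall A, Hom A A;
  comp : forall A B C, Hom B C -> Hom A B -> Hom A C;
  comp_idl : forall A B (f : Hom A B), comp (idm B) f = f;
  comp_idr : forall A B (f : Hom A B), comp f (idm A) = f;
  comp_assoc : forall A B C D (h : Hom C D) (g : Hom B C) (f : Hom A B),
      comp h (comp g f) = comp (comp h g) f
}.
Arguments Hom {c} _ _.
Arguments idm {c} _.
Arguments comp {c A B C} _ _.

Record Functor (C D : Category) := {
  fobj :> C -> D;
  fmap : forall A B, Hom A B -> Hom (fobj A) (fobj B);
  fmap_id : forall A, fmap (idm A) = idm (fobj A);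
  fmap_comp : forall A B E (g : Hom B E) (f : Hom A B),
      fmap (comp g f) = comp (fmap g) (fmap f)
}.
Arguments fmap {C D} f0 {A B} _.

Definition is_equivalence (C D : Category) (F : Functor C D) : Prop :=
  exists (G : Functor D C)
         (u : forall X : C, Hom X (G (F X)))
         (u' : forall X : C, Hom (G (F X)) X)
         (e : forall Y : D, Hom (F (G Y)) Y)
         (e' : forall Y : D, Hom Y (F (G Y))),
    (forall X X' (f : Hom X X'), comp (fmap G (fmap F f)) (u X) = comp (u X') f) /\
    (forall X, comp (u' X) (u X) = idm X) /\
    (forall X, comp (u X) (u' X) = idm (G (F X))) /\
    (forall Y Y' (g : Hom Y Y'), comp g (e Y) = comp (e Y') (fmap F (fmap G g))) /\
    (forall Y, comp (e' Y) (e Y) = idm (F (G Y))) /\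
    (forall Y, comp (e Y) (e' Y) = idm Y).

Definition Sets : Category.
Proof.
  refine {| Obj := Type; Hom := fun X Y => X -> Y;
            idm := fun X (x : X) => x;
            comp := fun X Y Z (g : Y -> Z) (f : X -> Y) (x : X) => g (f x) |};
  reflexivity.
Defined.

(** * The state monad T = U F, with F X = S × X and U X = X^S *)

Section StateMonad.
Variable S : Type.

Definition T (X : Type) : Type := S -> S * X.

Definition Tmap (X Y : Type) (f : X -> Y) (t : T X) : T Y :=
  fun s => (fst (t s), f (snd (t s))).

Definition etaT (X : Type) (x : X) : T X := fun s => (s, x).

Definition ev (Z : Type) (p : S * (S -> Z)) : Z := snd p (fst p).

(** [mu_X = (epsilon_{S × X})^S] *)
Definition muT (X : Type) (tt : T (T X)) : T X := fun s => ev (tt s).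

Record TAlg := {
  carrier : Type;
  alg : T carrier -> carrier;
  alg_assoc : forall t : T (T carrier), alg (Tmap alg t) = alg (muT t);
  alg_unit : forall x : carrier, alg (etaT x) = x
}.

Arguments alg : clear implicits.

Record AlgHom (A B : TAlg) := {
  amap :> carrier A -> carrier B;
  amap_hom : forall t : T (carrier A), alg B (Tmap amap t) = amap (alg A t)
}.

Lemma AlgHom_eq (A B : TAlg) (f g : AlgHom A B) :
  (forall x, f x = g x) -> f = g.
Proof.
  destruct f as [f hf], g as [g hg]; simpl; intro H.
  assert (f = g) by (apply functional_extensionality; exact H).
  subst g. f_equal. apply proof_irrelevance.
Qed.

Definition AlgHom_id (A : TAlg) : AlgHom A A.
Proof.
  refine {| amap := fun x => x |}. intro t. f_equal.
  apply functional_extensionality; intro s; unfold Tmap; destruct (t s); reflexivity.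
Defined.

Definition AlgHom_comp (A B C : TAlg) (g : AlgHom B C) (f : AlgHom A B)
  : AlgHom A C.
Proof.
  refine {| amap := fun x => g (f x) |}. intro t.
  rewrite <- (amap_hom f t), <- (amap_hom g). reflexivity.
Defined.

Definition AlgT : Category.
Proof.
  refine {| Obj := TAlg; Hom := AlgHom; idm := AlgHom_id; comp := AlgHom_comp |};
  intros; apply AlgHom_eq; reflexivity.
Defined.

Definition K_obj (Y : Type) : TAlg.
Proof.
  refine {| carrier := S -> Y; alg := fun c s => ev (c s) |}.
  - intro t. reflexivity.
  - intro x. reflexivity.
Defined.

Definition K_hom (Y Y' : Type) (g : Y -> Y') : AlgHom (K_obj Y) (K_obj Y').
Proof.
  exact (@Build_AlgHom (K_obj Y) (K_obj Y') (fun (f : S -> Y) (s : S) => g (f s))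
           (fun t => eq_refl)).
Defined.

Definition K : Functor Sets AlgT.
Proof.
  refine (@Build_Functor Sets AlgT K_obj K_hom _ _);
  intros; apply AlgHom_eq; reflexivity.
Defined.

End StateMonad.

(** Every algebra [(A, h)] of the state monad carries operations
    [put s x := h (fun _ => (s, x))] that overwrite the state; associativity
    gives [put s' (put s x) = put s x]. Writing [B] for the elements fixed by
    every [put s], the maps [x |-> (s |-> put s x)] and
    [f |-> h (s |-> (s, f s))] are mutually inverse algebra isomorphisms
    [A ~ K B], so [A |-> B] is a quasi-inverse of [K]. Conversely the fixed
    points of [K Y] are the constant maps [S -> Y], which form a copy of [Y]
    precisely because [S] is nonempty. *)

From Stdlib Require Import FunctionalExtensionality ProofIrrelevance.
From Corelib Require Import ssreflect ssrfun.
Set Implicit Arguments.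
Unset Strict Implicit.

Lemma sig_eq (X : Type) (P : X -> Prop) (a b : {x | P x}) :
  proj1_sig a = proj1_sig b -> a = b.
Proof.
by case: a b => [x Px] [y Py] /= exy; subst y; f_equal; apply: proof_irrelevance.
Qed.

Section StateAlgebras.
Variable S : Type.

Section Algebra.
Variable A : TAlg S.
Local Notation act := (@alg S A).

Lemma act_flatten (t : S -> S * (S -> S * carrier A)) :
  act (fun s => (fst (t s), act (snd (t s)))) = act (fun s => snd (t s) (fst (t s))).
Proof. exact: (alg_assoc t). Qed.

Definition put (s : S) (x : carrier A) : carrier A := act (fun _ => (s, x)).

Lemma put_put s s' x : put s' (put s x) = put s x.
Proof. exact: (act_flatten (fun _ => (s', fun _ => (s, x)))). Qed.

Definition stable : Type := {x : carrier A | forall s, put s x = x}.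

Definition put_stable (x : carrier A) (s : S) : stable :=
  exist (fun y => forall s', put s' y = y) (put s x) (fun s' => put_put s s' x).

Definition glue (f : S -> stable) : carrier A := act (fun s => (s, proj1_sig (f s))).

Lemma glue_put_stable x : glue (put_stable x) = x.
Proof.
rewrite /glue /= (act_flatten (fun s => (s, fun _ => (s, x)))).
exact: alg_unit.
Qed.

Lemma put_stable_glue f : put_stable (glue f) = f.
Proof.
apply: functional_extensionality => s; apply: sig_eq => /=.
rewrite /put /glue (act_flatten (fun _ => (s, fun s' => (s', proj1_sig (f s'))))).
exact: (proj2_sig (f s) s).
Qed.

Lemma put_stable_hom (t : T S (carrier A)) :
  alg (t0 := K_obj S stable) (Tmap put_stable t) = put_stable (act t).
Proof.
apply: functional_extensionality => s; apply: sig_eq => /=.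
rewrite /ev /Tmap /put /= (act_flatten (fun _ => (s, t))) /=.
by case: (t s).
Qed.

Definition put_stable_alg : AlgHom A (K_obj S stable) :=
  Build_AlgHom put_stable_hom.

Lemma glue_hom (t : T S (S -> stable)) :
  act (Tmap glue t) = glue (alg (t0 := K_obj S stable) t).
Proof.
rewrite -[LHS]glue_put_stable -put_stable_hom; congr glue.
apply: functional_extensionality => s /=; rewrite /Tmap /ev put_stable_glue.
by case: (t s).
Qed.

Definition glue_alg : AlgHom (K_obj S stable) A :=
  @Build_AlgHom S (K_obj S stable) A glue glue_hom.

End Algebra.

Definition stable_map (A B : TAlg S) (f : AlgHom A B) (x : stable A) : stable B.
Proof.
refine (exist _ (f (proj1_sig x)) _) => s.
rewrite -[RHS](f_equal f (proj2_sig x s)).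
exact: (amap_hom f (fun _ => (s, proj1_sig x))).
Defined.

Definition stable_functor : Functor (AlgT S) Sets.
Proof.
refine (@Build_Functor (AlgT S) Sets (@stable) stable_map _ _) => *;
by apply: functional_extensionality => x; apply: sig_eq.
Defined.

Definition const_stable (Y : Type) (y : Y) : stable (K_obj S Y) :=
  exist (fun g => forall s, put (A := K_obj S Y) s g = g) (fun _ => y) (fun _ => erefl).

Lemma const_stable_eval (Y : Type) (f : stable (K_obj S Y)) (s0 : S) :
  const_stable (proj1_sig f s0) = f.
Proof.
apply: sig_eq; apply: functional_extensionality => s /=.
exact: esym (f_equal (fun g => g s0) (proj2_sig f s)).
Qed.

End StateAlgebras.

Theorem theorem1 (S : Type) (HS : inhabited S) : is_equivalence (K S).
Proof.
case: HS => s0.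
exists (stable_functor S), (@const_stable S),
  (fun Y (f : stable (K_obj S Y)) => proj1_sig f s0),
  (@glue_alg S), (@put_stable_alg S).
split; [|split; [|split; [|split; [|split]]]].
- by move=> Y Y' g; apply: functional_extensionality => y; apply: sig_eq.
- by [].
- by move=> Y; apply: functional_extensionality => f; exact: const_stable_eval.
- by move=> A B g; apply: AlgHom_eq => f /=; rewrite /glue -(amap_hom g).
- by move=> A; apply: AlgHom_eq => f; exact: put_stable_glue.
- by move=> A; apply: AlgHom_eq => x; exact: glue_put_stable.
Qed.
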